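(* Let $f:\mathbb R^n\to\mathbb R$ be convex, differentiable and $L$-Lipschitz smooth, $g:\mathbb R^n\to\mathbb R\cup\{+\infty\}$ proper, closed and convex, $F=f+g$, and assume $F$ has a minimizer $\bar x$. Let $(B_k)_{k\ge0}\subseteq(0,\infty)$, $(\rho_k)_{k\ge0}\subseteq[0,\infty)$, $L_k=B_k+\rho_k$, and assume there are constants $L_{\max}\ge L_{\min}>0$ with $L_k\in[L_{\min},L_{\max}]$ for all $k$. Let $\alpha_0=1$ and, for $k\ge1$, let $\alpha_k\in(0,1]$ satisfy $1-\alpha_k=\frac{\alpha_k^2L_k}{\alpha_{k-1}^2L_{k-1}}$. Define $\beta_0=1$, $\beta_k=\prod_{i=1}^k\max\big(1-\alpha_i,\frac{\alpha_i^2L_i}{\alpha_{i-1}^2L_{i-1}}\big)$ for $k\ge1$, fix $\mathcal E_0>0$ and $p>1$, and let $\mathcal R_k(p)=\mathcal E_0\big(1+\sum_{l=1}^kl^{-p}\big)$. Given $x_{-1},x^\circ_{-1}\in\mathbb R^n$, let $(y_k,x_k,x^\circ_k)_{k\ge0}$ and $(\epsilon_k)_{k\ge0}$ satisfy for all $k\ge0$: $y_k=\alpha_kx^\circ_{k-1}+(1-\alpha_k)x_{k-1}$; $x_k\approx_{\epsilon_k}T_{L_k}(y_k)$; $D_f(x_k,y_k)\le\frac{B_k}2\|x_k-y_k\|^2$; $x^\circ_k=x_{k-1}+\alpha_k^{-1}(x_k-x_{k-1})$; where $\epsilon_0=\mathcal E_0$ and $\epsilon_k=\mathcal E_0\beta_kk^{-p}+\frac{\rho_k}2\|x_k-y_k\|^2$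 for $k\ge1$. Then for all $k\ge0$, $$F(x_k)-F(\bar x)+\frac{\alpha_k^2L_k}2\|\bar x-x^\circ_k\|^2\le\Big(1+\frac{k\sqrt{L_0}}{2\sqrt{L_{\max}}}\Big)^{-2}\Big(\frac{L_0}2\|\bar x-x^\circ_{-1}\|^2+\mathcal R_k(p)\Big).$$ In particular, since $\mathcal R_k(p)\le\mathcal E_0\big(1+\sum_{l\ge1}l^{-p}\big)<\infty$, $F(x_k)-F(\bar x)=\mathcal O(1/k^2)$.
   Context: $D_f(u,w)=f(u)-f(w)-\langle\nabla f(w),u-w\rangle$; $L$-Lipschitz smooth means $D_f(u,w)\le\frac L2\|u-w\|^2$ for all $u,w$. For proper $h$, $\epsilon\ge0$: $\partial_\epsilon h(\bar x)=\{v:\langle v,u-\bar x\rangle\le h(u)-h(\bar x)+\epsilon\ \forall u\}$ for $\bar x\in\operatorname{dom}h$, $\emptyset$ otherwise. $\tilde x\approx_\epsilon T_\rho(x)$ means $\mathbf 0\in\nabla f(x)-\rho(x-\tilde x)+\partial_\epsilon g(\tilde x)$. *)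

From HB Require Import structures.
From mathcomp Require Import all_boot all_order all_algebra.
From mathcomp Require Import reals constructive_ereal ereal exp.
Set Implicit Arguments. Unset Strict Implicit. Unset Printing Implicit Defensive.
Import Order.TTheory GRing.Theory Num.Theory.
Local Open Scope ring_scope.

Section Defs.
Variables (R : realType) (n : nat).
Local Notation V := 'rV[R]_n.

Definition inner (u v : V) : R := (u *m v^T) 0 0.
Definition enorm (u : V) : R := Num.sqrt (inner u u).

Definition has_gradient (f : V -> R) (gf : V -> V) : Prop :=
  forall x : V, forall eps : R, 0 < eps -> exists2 delta : R, 0 < delta &
    forall h : V, enorm h < delta ->
      `|f (x + h) - f x - inner (gf x) h| <= eps * enorm h.

Definition convex_fun (f : V -> R) : Prop :=
  forall (x y : V) (l : R), 0 <= l <= 1 ->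
    f (l *: x + (1 - l) *: y) <= l * f x + (1 - l) * f y.

Definition bregman (f : V -> R) (gf : V -> V) (u w : V) : R :=
  f u - f w - inner (gf w) (u - w).

Definition lipschitz_smooth (f : V -> R) (gf : V -> V) (L : R) : Prop :=
  forall u w : V, bregman f gf u w <= L / 2 * enorm (u - w) ^+ 2.

Definition proper_fun (g : V -> \bar R) : Prop :=
  (exists x : V, g x < +oo)%E /\ (forall x : V, -oo < g x)%E.

(* closed = lower semicontinuous *)
Definition closed_fun (g : V -> \bar R) : Prop :=
  forall (x : V) (t : R), (t%:E < g x)%E -> exists2 delta : R, 0 < delta &
    forall y : V, enorm (y - x) < delta -> (t%:E < g y)%E.

Definition convex_efun (g : V -> \bar R) : Prop :=
  forall (x y : V) (l : R), 0 < l < 1 ->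
    (g (l *: x + (1 - l) *: y)%R <= l%:E * g x + (1 - l)%R%:E * g y)%E.

Definition eps_subdiff (g : V -> \bar R) (eps : R) (xb v : V) : Prop :=
  (g xb < +oo)%E /\
  forall u : V, ((inner v (u - xb))%:E <= g u - g xb + eps%:E)%E.

(* xt \approx_eps T_rho(x) :  0 \in gf x - rho (x - xt) + \partial_eps g (xt) *)
Definition approx_prox (gf : V -> V) (g : V -> \bar R) (rho eps : R) (x xt : V) :
  Prop := exists v : V, eps_subdiff g eps xt v /\ gf x - rho *: (x - xt) + v = 0.

End Defs.

Definition beta_seq (R : realType) (alpha L : nat -> R) (k : nat) : R :=
  \prod_(1 <= i < k.+1)
     Num.max (1 - alpha i) (alpha i ^+ 2 * L i / (alpha i.-1 ^+ 2 * L i.-1)).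

Definition Rk (R : realType) (E0 p : R) (k : nat) : R :=
  E0 * (1 + \sum_(1 <= l < k.+1) powR (l%:R) (- p)).

(* Put a := α_(k+1) and u := a x̄ + (1 - a) x_k.  The ε-subgradient inequality of the
   inexact prox step, the gradient inequality of f and D_f(x,y) <= B/2 |x - y|^2 give a
   descent inequality at u in which the part ρ_k/2 |x_k - y_k|^2 of ε_k is exactly absorbed,
   because L_k = B_k + ρ_k.  Since y_(k+1) - u = a (x°_k - x̄), x_(k+1) - u = a (x°_(k+1) - x̄)
   and F is convex, the Lyapunov quantity Φ_k = F(x_k) - F(x̄) + α_k^2 L_k/2 |x̄ - x°_k|^2
   satisfies Φ_(k+1) <= (1 - a) Φ_k + E0 β_(k+1) (k+1)^-p.  As β_(k+1) = (1 - a) β_k,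
   induction gives Φ_k <= β_k (L_0/2 |x̄ - x°_(-1)|^2 + R_k(p)).  Finally β_k = α_k^2 L_k / L_0,
   and the recursion for α makes 1/sqrt(β_k) grow by at least sqrt(L_0) / (2 sqrt(L_max))
   per step. *)

From HB Require Import structures.
From mathcomp Require Import all_boot all_order all_algebra.
From mathcomp Require Import reals constructive_ereal ereal exp.
From mathcomp Require Import ring lra.
Set Implicit Arguments. Unset Strict Implicit. Unset Printing Implicit Defensive.
Import Order.TTheory GRing.Theory Num.Theory.
Local Open Scope ring_scope.

Section EuclideanGeometry.
Variables (R : realType) (n : nat).
Implicit Types (u v w : 'rV[R]_n) (a : R).

Lemma innerC u v : inner u v = inner v u.
Proof. by rewrite /inner -{1}(trmxK u) -trmx_mul mxE. Qed.

Lemma innerDl u v w : inner (u + v) w = inner u w + inner v w.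
Proof. by rewrite /inner mulmxDl mxE. Qed.

Lemma innerZl a u w : inner (a *: u) w = a * inner u w.
Proof. by rewrite /inner -scalemxAl mxE. Qed.

Lemma innerBl u v w : inner (u - v) w = inner u w - inner v w.
Proof. by rewrite -scaleN1r innerDl innerZl mulN1r. Qed.

Lemma innerDr u v w : inner w (u + v) = inner w u + inner w v.
Proof. by rewrite innerC innerDl !(innerC w). Qed.

Lemma innerZr a u w : inner w (a *: u) = a * inner w u.
Proof. by rewrite innerC innerZl innerC. Qed.

Lemma innerBr u v w : inner w (u - v) = inner w u - inner w v.
Proof. by rewrite innerC innerBl !(innerC w). Qed.

Lemma innerNr u w : inner w (- u) = - inner w u.
Proof. by rewrite -scaleN1r innerZr mulN1r. Qed.

Lemma inner_ge0 u : 0 <= inner u u.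
Proof.
rewrite /inner mxE; apply: sumr_ge0 => j _.
by rewrite mxE -expr2 sqr_ge0.
Qed.

Lemma enorm_ge0 u : 0 <= enorm u.
Proof. exact: sqrtr_ge0. Qed.

Lemma enorm_sqr u : enorm u ^+ 2 = inner u u.
Proof. by rewrite sqr_sqrtr // inner_ge0. Qed.

Lemma enormZ a u : enorm (a *: u) = `|a| * enorm u.
Proof.
by rewrite /enorm innerZl innerZr mulrA -expr2 sqrtrM ?sqr_ge0 // sqrtr_sqr.
Qed.

Lemma enormZ_sqr a u : enorm (a *: u) ^+ 2 = a ^+ 2 * enorm u ^+ 2.
Proof. by rewrite !enorm_sqr innerZl innerZr mulrA expr2. Qed.

Lemma enormD_sqr u v :
  enorm (u + v) ^+ 2 = enorm u ^+ 2 + 2 * inner u v + enorm v ^+ 2.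
Proof.
by rewrite !enorm_sqr innerDl !innerDr (innerC v u); ring.
Qed.

End EuclideanGeometry.

Section ConvexGradient.
Variables (R : realType) (n : nat) (f : 'rV[R]_n -> R) (gf : 'rV[R]_n -> 'rV[R]_n).
Hypothesis f_convex : convex_fun f.

Lemma convex_fun_secant u y t : 0 <= t <= 1 ->
  f (y + t *: (u - y)) <= f y + t * (f u - f y).
Proof.
move=> t01; have := f_convex u y t01.
have -> : t *: u + (1 - t) *: y = y + t *: (u - y).
  by apply/rowP => j; rewrite !mxE; ring.
lra.
Qed.

Hypothesis f_grad : has_gradient f gf.

Lemma convex_gradient_le u y : f y + inner (gf y) (u - y) <= f u.
Proof.
set h := u - y; suff : inner (gf y) h <= f u - f y by lra.
apply/ler_addgt0Pr => e e_gt0.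
have h_ge0 := enorm_ge0 h.
have eps_gt0 : 0 < e / (enorm h + 1) by rewrite divr_gt0 // ltr_pwDr.
have [d d_gt0 Hd] := f_grad y eps_gt0.
have eps_h : e / (enorm h + 1) * enorm h <= e.
  by rewrite mulrAC ler_pdivrMr ?ltr_pwDr // ler_pM2l //; lra.
set t := d / (2 * (enorm h + d)).
have hd_gt0 : 0 < 2 * (enorm h + d) by rewrite mulr_gt0 // ltr_wpDl.
have t_gt0 : 0 < t by rewrite divr_gt0.
have t_le1 : t <= 1 by rewrite ler_pdivrMr //; lra.
have th_lt : enorm (t *: h) < d.
  by rewrite enormZ (ger0_norm (ltW t_gt0)) mulrAC ltr_pdivrMr //; nra.
have := Hd _ th_lt; rewrite innerZr enormZ (ger0_norm (ltW t_gt0)) ler_norml.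
case/andP => Hlo _.
have := convex_fun_secant u y (t := t); rewrite (ltW t_gt0) t_le1 => /(_ isT) Hsec.
have : t * inner (gf y) h <= t * (f u - f y + e).
  by rewrite -/h in Hsec; nra.
by rewrite ler_pM2l.
Qed.

End ConvexGradient.

Section ExtendedValued.
Variables (R : realType) (n : nat) (g : 'rV[R]_n -> \bar R).
Hypothesis g_gtNy : forall u, (-oo < g u)%E.

Lemma fin_num_lty u : (g u < +oo)%E -> g u \is a fin_num.
Proof. by move=> gu; rewrite fin_numElt g_gtNy. Qed.

Lemma convex_efun_fine u w l : convex_efun g ->
  g u \is a fin_num -> g w \is a fin_num -> 0 <= l <= 1 ->
  g (l *: u + (1 - l) *: w) \is a fin_num /\
  fine (g (l *: u + (1 - l) *: w)) <= l * fine (g u) + (1 - l) * fine (g w).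
Proof.
move=> g_convex gu gw /andP [l_ge0 l_le1].
have [->|l_neq0] := eqVneq l 0.
  by rewrite scale0r add0r subr0 scale1r mul0r mul1r add0r.
have [->|l_neq1] := eqVneq l 1.
  by rewrite scale1r subrr scale0r addr0 mul1r mul0r addr0.
have l01 : 0 < l < 1 by rewrite !lt_neqAle eq_sym l_neq0 l_neq1 l_ge0 l_le1.
have le_g := g_convex u w l l01.
rewrite -(fineK gu) -(fineK gw) -!EFinM -EFinD in le_g.
have g_fin : g (l *: u + (1 - l) *: w) \is a fin_num.
  by apply: fin_num_lty; apply: le_lt_trans le_g _; rewrite ltry.
by split=> //; rewrite -lee_fin (fineK g_fin).
Qed.

Lemma approx_prox_fin_num (gf : 'rV[R]_n -> 'rV[R]_n) L e y x :
  approx_prox gf g L e y x -> g x \is a fin_num.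
Proof. by case=> v [[gx _] _]; apply: fin_num_lty. Qed.

Variables (f : 'rV[R]_n -> R) (gf : 'rV[R]_n -> 'rV[R]_n).
Hypotheses (f_convex : convex_fun f) (f_grad : has_gradient f gf).

Lemma approx_prox_descent B rho e d y x u :
  approx_prox gf g (B + rho) e y x ->
  bregman f gf x y <= B / 2 * enorm (x - y) ^+ 2 ->
  e <= d + rho / 2 * enorm (x - y) ^+ 2 ->
  g u \is a fin_num ->
  f x + fine (g x) - (f u + fine (g u))
    <= (B + rho) / 2 * (enorm (u - y) ^+ 2 - enorm (u - x) ^+ 2) + d.
Proof.
move=> prox breg e_le gu; have gx := approx_prox_fin_num prox.
case: prox => v [[_ v_sub] v_eq].
have vE : v = (B + rho) *: (y - x) - gf y.
  apply/rowP => j; have := congr1 (fun M : 'rV[R]_n => M 0 j) v_eq.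
  by rewrite !mxE; lra.
have sub := v_sub u.
rewrite -(fineK gu) -(fineK gx) -EFinB -EFinD lee_fin vE innerBl innerZl in sub.
have cross : inner (y - x) (u - x) = - inner (u - x) (x - y).
  by rewrite innerC -innerNr opprB.
have polar := enormD_sqr (u - x) (x - y); rewrite subrKA in polar.
have grad := convex_gradient_le f_convex f_grad u y.
move: sub grad breg; rewrite /bregman cross !(innerBr _ _ (gf y)); nra.
Qed.

End ExtendedValued.

Lemma proper_argmin_fin_num (R : realType) (n : nat) (f : 'rV[R]_n -> R)
    (g : 'rV[R]_n -> \bar R) (xbar : 'rV[R]_n) :
  proper_fun g -> (forall u, ((f xbar)%:E + g xbar <= (f u)%:E + g u)%E) ->
  g xbar \is a fin_num.
Proof.
move=> [[u0 gu0] g_gtNy] xbar_min; rewrite fin_numElt g_gtNy /=.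
move: (xbar_min u0); rewrite -(fineK (fin_num_lty g_gtNy gu0)) -EFinD.
by case: (g xbar) => [r| |] //; rewrite ltry.
Qed.

Lemma inv_increment_ge (R : realFieldType) (a r r' M : R) :
  0 < r -> 0 < r' -> 0 < M ->
  r' ^+ 2 = (1 - a) * r ^+ 2 -> r' <= a * M -> (2 * M)^-1 <= r'^-1 - r^-1.
Proof.
move=> r_gt0 r'_gt0 M_gt0 r'_sqr r'_le.
have a_gt0 : 0 < a by nra.
have r'_le_r : r' <= r by nra.
have ar_le : a * r <= 2 * (r - r') by nra.
have -> : r'^-1 - r^-1 = (r - r') / (r' * r) by field; rewrite !gt_eqF.
rewrite ler_pdivlMr ?mulr_gt0 // mulrC ler_pdivrMr ?mulr_gt0 //; nra.
Qed.

Section BetaSequence.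
Variables (R : realType) (alpha L : nat -> R).
Hypothesis alpha_rec :
  forall k, 1 - alpha k.+1 = alpha k.+1 ^+ 2 * L k.+1 / (alpha k ^+ 2 * L k).

Lemma beta_seq0 : beta_seq alpha L 0 = 1.
Proof. by rewrite /beta_seq big_geq. Qed.

Lemma beta_seqS k : beta_seq alpha L k.+1 = beta_seq alpha L k * (1 - alpha k.+1).
Proof. by rewrite /beta_seq big_nat_recr //= -alpha_rec maxxx. Qed.

Hypotheses (alpha0 : alpha 0 = 1) (alpha_gt0 : forall k, 0 < alpha k)
  (L_gt0 : forall k, 0 < L k).

Lemma beta_seqE k : beta_seq alpha L k = alpha k ^+ 2 * L k / L 0.
Proof.
elim: k => [|k IH]; first by rewrite beta_seq0 alpha0 expr1n mul1r divff ?gt_eqF.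
rewrite beta_seqS IH alpha_rec.
by field; rewrite ?gt_eqF ?mulr_gt0 ?exprn_gt0.
Qed.

Variable Lmax : R.
Hypothesis L_le : forall k, L k <= Lmax.

Lemma inv_sqrt_beta_seq_ge k :
  1 + k%:R * Num.sqrt (L 0) / (2 * Num.sqrt Lmax)
    <= (Num.sqrt (beta_seq alpha L k))^-1.
Proof.
have sL0_gt0 : 0 < Num.sqrt (L 0) by rewrite sqrtr_gt0.
have Lmax_gt0 : 0 < Lmax := lt_le_trans (L_gt0 0) (L_le 0).
have sLmax_gt0 : 0 < Num.sqrt Lmax by rewrite sqrtr_gt0.
have sqrt_beta j :
    Num.sqrt (beta_seq alpha L j) = alpha j * Num.sqrt (L j) / Num.sqrt (L 0).
  have -> : beta_seq alpha L j = (alpha j * Num.sqrt (L j) / Num.sqrt (L 0)) ^+ 2.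
    by rewrite beta_seqE expr_div_n exprMn !sqr_sqrtr ?ltW.
  by rewrite sqrtr_sqr ger0_norm ?divr_ge0 ?mulr_ge0 ?sqrtr_ge0 ?ltW.
elim: k => [|k IH]; first by rewrite mul0r mul0r addr0 beta_seq0 sqrtr1 invr1.
have step : (2 * (Num.sqrt Lmax / Num.sqrt (L 0)))^-1
    <= (Num.sqrt (beta_seq alpha L k.+1))^-1 - (Num.sqrt (beta_seq alpha L k))^-1.
  apply: (inv_increment_ge (a := alpha k.+1)); rewrite ?sqrt_beta.
  - by rewrite !divr_gt0 ?mulr_gt0 ?sqrtr_gt0.
  - by rewrite !divr_gt0 ?mulr_gt0 ?sqrtr_gt0.
  - by rewrite divr_gt0.
  - rewrite !expr_div_n !exprMn !sqr_sqrtr ?ltW // alpha_rec.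
    by field; rewrite ?gt_eqF ?mulr_gt0 ?exprn_gt0.
  - by rewrite mulrA ler_pM2r ?invr_gt0 // ler_pM2l // ler_sqrt ?L_le ?ltW.
have c_eq : (2 * (Num.sqrt Lmax / Num.sqrt (L 0)))^-1
    = Num.sqrt (L 0) / (2 * Num.sqrt Lmax) by field; rewrite !gt_eqF.
rewrite c_eq in step; rewrite mulrSr; lra.
Qed.

Lemma beta_seq_le k :
  beta_seq alpha L k <= (1 + k%:R * Num.sqrt (L 0) / (2 * Num.sqrt Lmax)) ^- 2.
Proof.
have beta_gt0 : 0 < beta_seq alpha L k.
  by rewrite beta_seqE !(divr_gt0, mulr_gt0, exprn_gt0).
have := inv_sqrt_beta_seq_ge k; set c := 1 + _ => c_le.
have c_ge1 : 1 <= c.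
  by rewrite lerDl !(divr_ge0, mulr_ge0, sqrtr_ge0, ler0n).
have c_gt0 : 0 < c := lt_le_trans ltr01 c_ge1.
have s_gt0 := lt_le_trans c_gt0 c_le.
rewrite -[X in X <= _](sqr_sqrtr (ltW beta_gt0)) -[X in X <= _]invrK -exprVn.
by rewrite lef_pV2 ?posrE ?exprn_gt0 // ler_pXn2r ?nnegrE ?(ltW c_gt0) ?(ltW s_gt0).
Qed.

End BetaSequence.

Lemma Rk0 (R : realType) (E0 p : R) : Rk E0 p 0 = E0.
Proof. by rewrite /Rk big_geq // addr0 mulr1. Qed.

Lemma RkS (R : realType) (E0 p : R) k :
  Rk E0 p k.+1 = Rk E0 p k + E0 * powR k.+1%:R (- p).
Proof. by rewrite /Rk big_nat_recr //=; ring. Qed.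

Lemma Rk_ge0 (R : realType) (E0 p : R) k : 0 <= E0 -> 0 <= Rk E0 p k.
Proof.
move=> E0_ge0; rewrite mulr_ge0 // addr_ge0 //.
by apply: sumr_ge0 => l _; apply: powR_ge0.
Qed.

Section AcceleratedScheme.
Variables (R : realType) (n : nat) (f : 'rV[R]_n -> R) (gf : 'rV[R]_n -> 'rV[R]_n)
  (g : 'rV[R]_n -> \bar R) (B rho alpha eps : nat -> R) (E0 p : R)
  (xbar x_m1 xo_m1 : 'rV[R]_n) (y x xo : nat -> 'rV[R]_n).
Let L k := B k + rho k.
Let Fr u := f u + fine (g u).

Hypotheses (f_convex : convex_fun f) (f_grad : has_gradient f gf)
  (g_gtNy : forall u, (-oo < g u)%E) (g_convex : convex_efun g)
  (g_xbar : g xbar \is a fin_num).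
Hypotheses (rho_ge0 : forall k, 0 <= rho k) (L_gt0 : forall k, 0 < L k)
  (alpha0 : alpha 0 = 1) (alpha_S : forall k, 0 < alpha k.+1 <= 1)
  (alpha_rec : forall k,
     1 - alpha k.+1 = alpha k.+1 ^+ 2 * L k.+1 / (alpha k ^+ 2 * L k)).
Hypotheses (y0 : y 0 = alpha 0 *: xo_m1 + (1 - alpha 0) *: x_m1)
  (xo0 : xo 0 = x_m1 + (alpha 0)^-1 *: (x 0 - x_m1))
  (yS : forall k, y k.+1 = alpha k.+1 *: xo k + (1 - alpha k.+1) *: x k)
  (xoS : forall k, xo k.+1 = x k + (alpha k.+1)^-1 *: (x k.+1 - x k))
  (prox : forall k, approx_prox gf g (L k) (eps k) (y k) (x k))
  (breg : forall k, bregman f gf (x k) (y k) <= B k / 2 * enorm (x k - y k) ^+ 2)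
  (eps0 : eps 0 = E0)
  (epsS : forall k, eps k.+1 = E0 * beta_seq alpha L k.+1 * powR k.+1%:R (- p)
                               + rho k.+1 / 2 * enorm (x k.+1 - y k.+1) ^+ 2).

Lemma alpha_gt0 k : 0 < alpha k.
Proof. by case: k => [|k]; [rewrite alpha0 | case/andP: (alpha_S k)]. Qed.

Definition lyap k :=
  Fr (x k) - Fr xbar + alpha k ^+ 2 * L k / 2 * enorm (xbar - xo k) ^+ 2.

Lemma lyap0 : lyap 0 <= L 0 / 2 * enorm (xbar - xo_m1) ^+ 2 + E0.
Proof.
have y0E : y 0 = xo_m1 by rewrite y0 alpha0 scale1r subrr scale0r addr0.
have xo0E : xo 0 = x 0 by rewrite xo0 alpha0 invr1 scale1r addrC subrK.
have eps_le : eps 0 <= E0 + rho 0 / 2 * enorm (x 0 - y 0) ^+ 2.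
  by rewrite eps0 lerDl mulr_ge0 ?divr_ge0 ?exprn_ge0 ?enorm_ge0.
have := approx_prox_descent g_gtNy f_convex f_grad (prox 0) (breg 0) eps_le g_xbar.
by rewrite /lyap /Fr /L y0E xo0E alpha0 expr1n mul1r; lra.
Qed.

Lemma lyapS k : lyap k.+1
  <= (1 - alpha k.+1) * lyap k + E0 * beta_seq alpha L k.+1 * powR k.+1%:R (- p).
Proof.
set a := alpha k.+1; have /andP [a_gt0 a_le1] := alpha_S k.
have a01 : 0 <= a <= 1 by rewrite ltW.
set u := a *: xbar + (1 - a) *: x k.
have [g_u Fr_u] := convex_efun_fine g_gtNy g_convex g_xbar
  (approx_prox_fin_num g_gtNy (prox k)) a01.
have f_u := f_convex xbar (x k) a01.
have eps_le : eps k.+1 <= E0 * beta_seq alpha L k.+1 * powR k.+1%:R (- p)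
    + rho k.+1 / 2 * enorm (x k.+1 - y k.+1) ^+ 2 by rewrite epsS.
have descent := approx_prox_descent g_gtNy f_convex f_grad (prox k.+1) (breg k.+1)
  eps_le g_u.
have uy : u - y k.+1 = a *: (xbar - xo k).
  by rewrite yS -/a; apply/rowP => j; rewrite !mxE; ring.
have ux : u - x k.+1 = a *: (xbar - xo k.+1).
  by rewrite xoS -/a; apply/rowP => j; rewrite !mxE; field; rewrite gt_eqF.
have weight : a ^+ 2 * L k.+1 = (1 - a) * (alpha k ^+ 2 * L k).
  rewrite /a alpha_rec; field.
  by rewrite (gt_eqF (alpha_gt0 k)) (gt_eqF (L_gt0 k)).
rewrite uy ux !enormZ_sqr in descent.
have lyap_k : (1 - a) * lyap k = (1 - a) * (Fr (x k) - Fr xbar)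
    + a ^+ 2 * L k.+1 / 2 * enorm (xbar - xo k) ^+ 2.
  by rewrite /lyap weight; ring.
have lyap_k1 : lyap k.+1 = Fr (x k.+1) - Fr xbar
    + a ^+ 2 * L k.+1 / 2 * enorm (xbar - xo k.+1) ^+ 2 by [].
move: descent Fr_u f_u; rewrite lyap_k1 lyap_k /Fr /L; lra.
Qed.

Lemma lyap_le k :
  lyap k <= beta_seq alpha L k * (L 0 / 2 * enorm (xbar - xo_m1) ^+ 2 + Rk E0 p k).
Proof.
elim: k => [|k IH]; first by rewrite beta_seq0 mul1r Rk0; apply: lyap0.
have a_compl_ge0 : 0 <= 1 - alpha k.+1 by rewrite subr_ge0; case/andP: (alpha_S k).
have := ler_wpM2l a_compl_ge0 IH.
have := lyapS k; rewrite (beta_seqS alpha_rec) RkS; lra.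
Qed.

End AcceleratedScheme.

Theorem theorem3p9 (R : realType) (n : nat)
  (f : 'rV[R]_n -> R) (gf : 'rV[R]_n -> 'rV[R]_n) (Lf : R)
  (g : 'rV[R]_n -> \bar R) (xbar : 'rV[R]_n)
  (B rho alpha eps : nat -> R) (Lmin Lmax E0 p : R)
  (x_m1 xo_m1 : 'rV[R]_n) (y x xo : nat -> 'rV[R]_n) :
  let L k := B k + rho k in
  let F u := ((f u)%:E + g u)%E in
  convex_fun f -> has_gradient f gf -> lipschitz_smooth f gf Lf ->
  proper_fun g -> closed_fun g -> convex_efun g ->
  (forall u, (F xbar <= F u)%E) ->
  (forall k, 0 < B k) -> (forall k, 0 <= rho k) ->
  0 < Lmin -> Lmin <= Lmax -> (forall k, Lmin <= L k <= Lmax) ->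
  alpha 0%N = 1 ->
  (forall k, 0 < alpha k.+1 <= 1) ->
  (forall k, 1 - alpha k.+1 = alpha k.+1 ^+ 2 * L k.+1 / (alpha k ^+ 2 * L k)) ->
  0 < E0 -> 1 < p ->
  (* iteration k = 0 (x_{-1}, xo_{-1} given) *)
  y 0%N = alpha 0%N *: xo_m1 + (1 - alpha 0%N) *: x_m1 ->
  xo 0%N = x_m1 + (alpha 0%N)^-1 *: (x 0%N - x_m1) ->
  (* iterations k >= 1 *)
  (forall k, y k.+1 = alpha k.+1 *: xo k + (1 - alpha k.+1) *: x k) ->
  (forall k, xo k.+1 = x k + (alpha k.+1)^-1 *: (x k.+1 - x k)) ->
  (* common conditions for all k >= 0 *)
  (forall k, approx_prox gf g (L k) (eps k) (y k) (x k)) ->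
  (forall k, bregman f gf (x k) (y k) <= B k / 2 * enorm (x k - y k) ^+ 2) ->
  eps 0%N = E0 ->
  (forall k, eps k.+1 = E0 * beta_seq alpha L k.+1 * powR (k.+1)%:R (- p)
                        + rho k.+1 / 2 * enorm (x k.+1 - y k.+1) ^+ 2) ->
  forall k : nat,
    (F (x k) - F xbar + (alpha k ^+ 2 * L k / 2 * enorm (xbar - xo k) ^+ 2)%:E
     <= ((1 + k%:R * Num.sqrt (L 0%N) / (2 * Num.sqrt Lmax)) ^- 2
         * (L 0%N / 2 * enorm (xbar - xo_m1) ^+ 2 + Rk E0 p k))%:E)%E.
Proof.
move=> L F f_convex f_grad _ g_proper _ g_convex xbar_min _ rho_ge0 Lmin_gt0 _ L_bnd
  alpha0 alpha_S alpha_rec E0_gt0 _ y0 xo0 yS xoS prox breg eps0 epsS k.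
have L_gt0 j : 0 < L j by case/andP: (L_bnd j) => /(lt_le_trans Lmin_gt0).
have L_le j : L j <= Lmax by case/andP: (L_bnd j).
have g_gtNy := g_proper.2.
have g_xbar := proper_argmin_fin_num g_proper xbar_min.
have g_xk := approx_prox_fin_num g_gtNy (prox k).
rewrite /F -(fineK g_xk) -(fineK g_xbar) -!EFinD lee_fin.
apply: le_trans (lyap_le f_convex f_grad g_gtNy g_convex g_xbar rho_ge0 L_gt0 alpha0
  alpha_S alpha_rec y0 xo0 yS xoS prox breg eps0 epsS k) _.
have bound_ge0 : 0 <= L 0%N / 2 * enorm (xbar - xo_m1) ^+ 2 + Rk E0 p k.
  by rewrite addr_ge0 ?Rk_ge0 ?(ltW E0_gt0) // mulr_ge0 ?divr_ge0 ?exprn_ge0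
    ?enorm_ge0 ?(ltW (L_gt0 0%N)).
by rewrite ler_wpM2r // (beta_seq_le alpha_rec alpha0 (alpha_gt0 alpha0 alpha_S)).
Qed.
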